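(* Let $F=\{f_i\}_{i=1}^N$ be a uniform tight frame for an $n$-dimensional Hilbert space $\mathcal{H}_n$ and let $p>1$. Then the canonical dual $S_F^{-1}F=\{S_F^{-1}f_i\}_{i=1}^N$ is a $1$-erasure spectrally optimal dual of $F$, i.e. $S_F^{-1}F\in\zeta_{\mathfrak{R}}^{(1),p}(F)$.
   Context: A uniform tight frame is a frame with $\sum_i|\langle f,f_i\rangle|^2=A\|f\|^2$ for all $f$ (some $A>0$) and all $\|f_i\|$ equal; $S_F$ is the frame operator $S_Ff=\sum_i\langle f,f_i\rangle f_i$. $G=\{g_i\}$ is a dual of $F$ if $f=\sum_i\langle f,f_i\rangle g_i$ for all $f$. For a dual $G$, $\mathrm{AE}_{\mathfrak{R}}^{(1),p}(F,G)=\{\frac1N\sum_{i=1}^N|\langle f_i,g_i\rangle|^p\}^{1/p}$ (the $\ell^p$-average of the spectral radii of the one-erasure error operators $f\mapsto\langle f,f_i\rangle g_i$), and $\zeta_{\mathfrak{R}}^{(1),p}(F)$ is the set of duals minimizing it over all duals of $F$. *)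

From HB Require Import structures.
From mathcomp Require Import all_boot all_order all_algebra.
From mathcomp Require Import complex.
From mathcomp Require Import reals exp.
Set Implicit Arguments. Unset Strict Implicit. Unset Printing Implicit Defensive.
Import Order.TTheory GRing.Theory Num.Theory.
Local Open Scope ring_scope.

(* The n-dimensional Hilbert space H_n is modelled as C^n = 'rV[R[i]]_n
   with the standard inner product <u, v> = \sum_k u_k * conj(v_k). *)
Section FrameDefs.
Variable R : realType.
Local Notation C := R[i].

Definition inner n (u v : 'rV[C]_n) : C :=
  \sum_(k < n) u ord0 k * conjc (v ord0 k).

Definition cabs (z : C) : R := Num.sqrt (complex.Re z ^+ 2 + complex.Im z ^+ 2).

Definition hnorm n (f : 'rV[C]_n) : R := Num.sqrt (complex.Re (inner f f)).

Definition tight_frame n N (F : 'I_N -> 'rV[C]_n) : Prop :=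
  exists A : R, 0 < A /\
    forall f : 'rV[C]_n,
      \sum_(i < N) cabs (inner f (F i)) ^+ 2 = A * hnorm f ^+ 2.

Definition uniform n N (F : 'I_N -> 'rV[C]_n) : Prop :=
  forall i j, hnorm (F i) = hnorm (F j).

Definition uniform_tight_frame n N (F : 'I_N -> 'rV[C]_n) : Prop :=
  tight_frame F /\ uniform F.

Definition frame_op n N (F : 'I_N -> 'rV[C]_n) (f : 'rV[C]_n) : 'rV[C]_n :=
  \sum_(i < N) inner f (F i) *: F i.

(* the matrix of S_F acting on row vectors: S_F f = f *m frame_mx F *)
Definition frame_mx n N (F : 'I_N -> 'rV[C]_n) : 'M[C]_n :=
  \matrix_(j, l) \sum_(i < N) conjc (F i ord0 j) * F i ord0 l.

Definition canonical_dual n N (F : 'I_N -> 'rV[C]_n) : 'I_N -> 'rV[C]_n :=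
  fun i => F i *m invmx (frame_mx F).

Definition is_dual n N (F G : 'I_N -> 'rV[C]_n) : Prop :=
  forall f : 'rV[C]_n, f = \sum_(i < N) inner f (F i) *: G i.

Definition AE1p (p : R) n N (F G : 'I_N -> 'rV[C]_n) : R :=
  powR (N%:R^-1 * \sum_(i < N) powR (cabs (inner (F i) (G i))) p) p^-1.

Definition zeta1p (p : R) n N (F : 'I_N -> 'rV[C]_n) : ('I_N -> 'rV[C]_n) -> Prop :=
  fun G => is_dual F G /\
    forall G' : 'I_N -> 'rV[C]_n, is_dual F G' -> AE1p p F G <= AE1p p F G'.

End FrameDefs.

Lemma frame_mxE (R : realType) n N (F : 'I_N -> 'rV[R[i]]_n) f :
  frame_op F f = f *m frame_mx F.
Proof.
apply/rowP=> l; rewrite /frame_op !mxE summxE.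
under [RHS]eq_bigr => j _ do rewrite mxE big_distrr.
rewrite [RHS]exchange_big /=; apply: eq_bigr => i _.
rewrite !mxE /inner big_distrl /=; apply: eq_bigr => k _.
by rewrite mulrA.
Qed.

(** For a tight frame with bound A the frame operator is A times the identity, so
    the canonical dual is g_i = f_i / A and ⟨f_i, g_i⟩ = ‖f_i‖² / A, which for a
    uniform frame is the same nonnegative number for every i.  For any dual G the
    numbers ⟨f_i, g_i⟩ sum to the trace of the identity, n; hence
    Σ |⟨f_i, g_i⟩| ≥ n, with equality for the canonical dual.  The power mean
    inequality M_1 ≤ M_p then gives AE(F, G) ≥ n / N = AE(F, S_F⁻¹F), the last
    equality because power means of a constant family all coincide. *)
From HB Require Import structures.
From mathcomp Require Import all_boot all_order all_algebra.
From mathcomp Require Import complex.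
From mathcomp Require Import reals exp ring lra.
Import Order.TTheory GRing.Theory Num.Theory.
Local Open Scope complex_scope.
Local Open Scope ring_scope.
Set Implicit Arguments. Unset Strict Implicit.

Section PowerMean.
Variable R : realType.

Definition mean N (a : 'I_N -> R) : R := N%:R^-1 * \sum_(i < N) a i.

Definition power_mean (p : R) N (a : 'I_N -> R) : R :=
  powR (N%:R^-1 * \sum_(i < N) powR (a i) p) p^-1.

(* Young's inequality x y <= x^p/p + y^q/q at y = m^(p-1), summed over i. *)
Lemma jensen_powR N (a : 'I_N -> R) m p : 1 < p -> 0 <= m ->
  (forall i, 0 <= a i) -> \sum_(i < N) a i = N%:R * m ->
  N%:R * powR m p <= \sum_(i < N) powR (a i) p.
Proof.
move=> p1 m0 a0 suma; have p0 : 0 < p by apply: lt_trans p1.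
pose q := p / (p - 1).
have q0 : 0 < q by rewrite divr_gt0 // subr_gt0.
have invq : q^-1 = 1 - p^-1.
  by rewrite /q invf_div; field; rewrite gt_eqF // subr_gt0.
have young i : a i * powR m (p - 1) <= powR (a i) p / p + powR m p * q^-1.
  have -> : powR m p = powR (powR m (p - 1)) q.
    by rewrite -powRrM /q mulrCA mulfV ?mulr1 // gt_eqF // subr_gt0.
  by apply: conjugate_powR => //; [exact: powR_ge0 | rewrite invq addrC subrK].
have sum_young : \sum_(i < N) a i * powR m (p - 1) <=
    \sum_(i < N) (powR (a i) p / p + powR m p * q^-1).
  by apply: ler_sum => i _; apply: young.
rewrite big_split /= sumr_const card_ord -!mulr_suml suma -mulrA mulr_powRB1 //
  invq -mulr_natr in sum_young.
have : N%:R * powR m p * p^-1 <= (\sum_(i < N) powR (a i) p) * p^-1 by lra.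
by rewrite ler_pM2r ?invr_gt0.
Qed.

Lemma mean_le_power_mean N (a : 'I_N -> R) p : 1 < p ->
  (forall i, 0 <= a i) -> mean a <= power_mean p a.
Proof.
case: N a => [|N] a p1 a0; first by rewrite /mean big_ord0 mulr0 powR_ge0.
have p0 : 0 < p by apply: lt_trans p1.
have N0 : (N.+1%:R : R) != 0 by rewrite pnatr_eq0.
have m0 : 0 <= mean a by rewrite mulr_ge0 ?invr_ge0 ?ler0n ?sumr_ge0.
have := jensen_powR p1 m0 a0 (esym (mulVKf N0 _)).
rewrite -ler_pdivlMl ?ltr0n // => le_powR.
rewrite -[mean a](powRr1 m0) -(divff (lt0r_neq0 p0)) powRrM.
apply: ge0_ler_powR le_powR; rewrite ?nnegrE ?powR_ge0 ?invr_ge0 ?(ltW p0) //.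
by rewrite mulr_ge0 ?invr_ge0 ?ler0n ?sumr_ge0 // => i _; apply: powR_ge0.
Qed.

Lemma power_mean_cst N (a : 'I_N -> R) p : p != 0 ->
  (forall i j, a i = a j) -> (forall i, 0 <= a i) -> power_mean p a = mean a.
Proof.
case: N a => [|N] a p0 a_cst a0.
  by rewrite /power_mean /mean !big_ord0 !mulr0 powR0 // invr_eq0.
have N0 : (N.+1%:R : R) != 0 by rewrite pnatr_eq0.
rewrite /power_mean /mean.
under eq_bigr do rewrite (a_cst _ ord0).
under [in RHS]eq_bigr do rewrite (a_cst _ ord0).
rewrite !sumr_const card_ord -(mulr_natl (powR _ _)) -(mulr_natl (a ord0)).
by rewrite !mulKf // -powRrM mulfV // powRr1.
Qed.

End PowerMean.

Section Frames.
Variable R : realType.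
Local Notation C := R[i].

Lemma cabs_sqr (z : C) : (cabs z ^+ 2)%:C = z * conjc z.
Proof.
case: z => a b; rewrite /cabs /= sqr_sqrtr ?addr_ge0 ?sqr_ge0 //.
by apply/eqP; rewrite eq_complex /=; apply/andP; split; apply/eqP; ring.
Qed.

Lemma cabs_ge0 (z : C) : 0 <= cabs z. Proof. exact: sqrtr_ge0. Qed.

Lemma cabsE (z : C) : (cabs z)%:C = `|z|.
Proof. by rewrite normc_def. Qed.

Lemma innerDl n (u v w : 'rV[C]_n) : inner (u + v) w = inner u w + inner v w.
Proof.
by rewrite /inner -big_split /=; apply: eq_bigr => k _; rewrite mxE mulrDl.
Qed.

Lemma innerDr n (u v w : 'rV[C]_n) : inner w (u + v) = inner w u + inner w v.
Proof.
by rewrite /inner -big_split /=; apply: eq_bigr => k _; rewrite mxE rmorphD mulrDr.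
Qed.

Lemma innerZl n a (u w : 'rV[C]_n) : inner (a *: u) w = a * inner u w.
Proof.
by rewrite /inner big_distrr /=; apply: eq_bigr => k _; rewrite mxE mulrA.
Qed.

Lemma innerZr n a (u w : 'rV[C]_n) : inner w (a *: u) = conjc a * inner w u.
Proof.
by rewrite /inner big_distrr /=; apply: eq_bigr => k _; rewrite mxE rmorphM mulrCA.
Qed.

Lemma innerBl n (u v w : 'rV[C]_n) : inner (u - v) w = inner u w - inner v w.
Proof. by rewrite innerDl -scaleN1r innerZl mulN1r. Qed.

Lemma inner_conj n (u w : 'rV[C]_n) : inner w u = conjc (inner u w).
Proof.
rewrite /inner rmorph_sum; apply: eq_bigr => k _.
by rewrite rmorphM /= conjcK mulrC.
Qed.

Lemma inner_suml n I (r : seq I) (P : pred I) (u : I -> 'rV[C]_n) w :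
  inner (\sum_(i <- r | P i) u i) w = \sum_(i <- r | P i) inner (u i) w.
Proof.
elim/big_rec2: _ => [|i y1 y2 _ <-]; last by rewrite innerDl.
by rewrite /inner big1 // => k _; rewrite mxE mul0r.
Qed.

Lemma hnorm_sqr n (f : 'rV[C]_n) : (hnorm f ^+ 2)%:C = inner f f.
Proof.
rewrite /hnorm; have -> : inner f f = (\sum_(k < n) cabs (f ord0 k) ^+ 2)%:C.
  by rewrite rmorph_sum; apply: eq_bigr => k _; rewrite /= cabs_sqr.
by rewrite /= sqr_sqrtr // sumr_ge0 // => k _; apply: sqr_ge0.
Qed.

Lemma inner_delta_mx n (M : 'M[C]_n) j k :
  inner (delta_mx 0 j *m M) (delta_mx 0 k) = M j k.
Proof.
rewrite /inner (bigD1 k) //= big1 ?addr0.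
  by rewrite -rowE !mxE !eqxx conjc1 mulr1.
by move=> l /negPf lk; rewrite !mxE lk andbF conjc0 mulr0.
Qed.

Lemma inner_delta_mxl n (v : 'rV[C]_n) k :
  inner (delta_mx 0 k) v = conjc (v ord0 k).
Proof.
rewrite /inner (bigD1 k) //= big1 ?addr0; first by rewrite !mxE !eqxx mul1r.
by move=> l /negPf lk; rewrite !mxE eq_sym lk andbF mul0r.
Qed.

(* Polarization at e_j + e_k and e_j + i e_k. *)
Lemma quadratic_form_eq0 n (M : 'M[C]_n) :
  (forall f, inner (f *m M) f = 0) -> M = 0.
Proof.
move=> Q0; apply/matrixP => j k; rewrite mxE.
pose e l : 'rV[C]_n := delta_mx 0 l.
have polar u v : inner ((u + v) *m M) (u + v) =
    inner (u *m M) u + inner (u *m M) v + inner (v *m M) u + inner (v *m M) v.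
  by rewrite mulmxDl !innerDl !innerDr !addrA.
have Qj := Q0 (e j); have Qk := Q0 (e k).
have Q1 := Q0 (e j + e k); have Qi := Q0 (e j + 'i%C *: e k).
rewrite polar Qj Qk add0r addr0 /e !inner_delta_mx in Q1.
rewrite polar -!scalemxAl !innerZl !innerZr {}Qj {}Qk /e !inner_delta_mx in Qi.
have conj_i : conjc 'i%C = - 'i%C :> C.
  by apply/eqP; rewrite eq_complex /= oppr0 !eqxx.
have i_neq0 : 'i%C != 0 :> C.
  by apply/eqP => /(congr1 (@complex.Im R)) /eqP; rewrite oner_eq0.
rewrite conj_i add0r !mulr0 addr0 in Qi.
have : 2 * 'i%C * M j k = 0.
  have -> : 2 * 'i%C * M j k =
      'i%C * (M j k + M k j) - (- 'i%C * M j k + 'i%C * M k j) by ring.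
  by rewrite Q1 Qi mulr0 subr0.
by move/eqP; rewrite !mulf_eq0 pnatr_eq0 (negPf i_neq0) => /eqP.
Qed.

Lemma tight_frame_mx n N (F : 'I_N -> 'rV[C]_n) A :
  (forall f, \sum_(i < N) cabs (inner f (F i)) ^+ 2 = A * hnorm f ^+ 2) ->
  frame_mx F = (A%:C)%:M.
Proof.
move=> tightF; apply/eqP; rewrite -subr_eq0; apply/eqP.
apply: quadratic_form_eq0 => f.
rewrite mulmxBr innerBl -frame_mxE /frame_op inner_suml mul_mx_scalar innerZl.
rewrite -hnorm_sqr -rmorphM -tightF rmorph_sum.
apply/eqP; rewrite subr_eq0; apply/eqP/eq_bigr => i _.
by rewrite /= innerZl cabs_sqr -inner_conj.
Qed.

Lemma canonical_dual_is_dual n N (F : 'I_N -> 'rV[C]_n) :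
  frame_mx F \in unitmx -> is_dual F (canonical_dual F).
Proof.
move=> Sunit f; rewrite /canonical_dual.
under eq_bigr do rewrite scalemxAl.
by rewrite -mulmx_suml -/(frame_op F f) frame_mxE mulmxK.
Qed.

Lemma canonical_dual_scalar n N (F : 'I_N -> 'rV[C]_n) a i :
  frame_mx F = a%:M -> canonical_dual F i = a^-1 *: F i.
Proof. by move=> Sa; rewrite /canonical_dual Sa invmx_scalar mul_mx_scalar. Qed.

(* Applying the dual identity to the k-th basis vector shows that
   Σ_i conj(f_i(k)) g_i(k) = 1; summing over k gives the trace n. *)
Lemma dual_sum_inner n N (F G : 'I_N -> 'rV[C]_n) :
  is_dual F G -> \sum_(i < N) inner (F i) (G i) = n%:R.
Proof.
move=> dualG.
have coord k : \sum_(i < N) conjc (F i ord0 k) * G i ord0 k = 1.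
  have := congr1 (fun v : 'rV[C]_n => v ord0 k) (dualG (delta_mx 0 k)).
  rewrite /= mxE summxE !eqxx /= => dual_e_k; rewrite [RHS]dual_e_k.
  by apply: eq_bigr => i _; rewrite mxE inner_delta_mxl.
rewrite /inner exchange_big /= -[n in RHS]card_ord -sumr_const.
apply: eq_bigr => k _; rewrite -[1]conjc1 -(coord k) rmorph_sum.
by apply: eq_bigr => i _; rewrite /= rmorphM /= conjcK mulrC.
Qed.

Lemma sum_cabsE I (r : seq I) (P : pred I) (z : I -> C) :
  (\sum_(i <- r | P i) cabs (z i))%:C = \sum_(i <- r | P i) `|z i|.
Proof. by rewrite rmorph_sum; apply: eq_bigr => i _; rewrite /= cabsE. Qed.

Lemma dual_sum_cabs_ge n N (F G : 'I_N -> 'rV[C]_n) :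
  is_dual F G -> n%:R <= \sum_(i < N) cabs (inner (F i) (G i)).
Proof.
move=> dualG; rewrite -lecR sum_cabsE rmorph_nat -(dual_sum_inner dualG).
apply: le_trans (ler_norm_sum _ _ _).
by rewrite real_ler_norm // (dual_sum_inner dualG) realn.
Qed.

Lemma ger0_dual_sum_cabs n N (F G : 'I_N -> 'rV[C]_n) :
  is_dual F G -> (forall i, 0 <= inner (F i) (G i)) ->
  \sum_(i < N) cabs (inner (F i) (G i)) = n%:R.
Proof.
move=> dualG inner0; apply: (@complexI R).
rewrite sum_cabsE rmorph_nat -(dual_sum_inner dualG).
by apply: eq_bigr => i _; rewrite ger0_norm.
Qed.

End Frames.

Theorem corollary5p2 (R : realType) (n N : nat) (F : 'I_N -> 'rV[R[i]]_n)
  (p : R) :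
  uniform_tight_frame F -> 1 < p ->
  zeta1p p F (canonical_dual F).
Proof.
move=> [[A [A0 tightF] unifF]] p1.
have SA := tight_frame_mx tightF.
have AC0 : A%:C != 0 :> R[i] by apply/eqP => /complexI /eqP; rewrite gt_eqF.
have dual_can : is_dual F (canonical_dual F).
  by apply: canonical_dual_is_dual; rewrite SA unitmxE det_scalar unitfE expf_neq0.
have innerE i : inner (F i) (canonical_dual F i) = (A^-1 * hnorm (F i) ^+ 2)%:C.
  have invA : (A%:C)^-1 = (A^-1)%:C by rewrite rmorphV ?unitfE ?gt_eqF.
  by rewrite (canonical_dual_scalar i SA) innerZr invA conjc_real -hnorm_sqr
    -rmorphM.
split=> [|G dualG]; first exact: dual_can.
have AE_can : AE1p p F (canonical_dual F) =
    mean (fun i => cabs (inner (F i) (canonical_dual F i))).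
  apply: power_mean_cst; last by move=> i; apply: cabs_ge0.
  - by rewrite gt_eqF // (lt_trans ltr01).
  - by move=> i j; rewrite !innerE (unifF i j).
rewrite AE_can; apply: le_trans (mean_le_power_mean p1 (fun i => cabs_ge0 _)).
rewrite /mean ler_wpM2l ?invr_ge0 ?ler0n // (ger0_dual_sum_cabs dual_can).
  exact: dual_sum_cabs_ge.
by move=> i; rewrite innerE ler0c mulr_ge0 ?invr_ge0 ?sqr_ge0 ?ltW.
Qed.
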